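(* Let $V$ be a nonempty finite set, let $f : \{-1,0,1\}^V \to \mathbb{Z}\cup\{+\infty\}$ be an integral bisubmodular function with $f(\mathbf{0})=0$, let $B = \mathrm{P}(f) \cap \mathbb{Z}^V$, and let $p \in B$. Let $u, v, w \in V$ and $s_u \in \{\pm\chi_u\}$, $s_v \in \{\pm\chi_v\}$, $s_w \in \{\pm\chi_w\}$. Then: (1) if $s_u \in \Phi_B(p)$ and $-s_u + s_v \in \Phi_B(p)$, then $s_v \in \Phi_B(p)$; (2) if $s_u + s_v \in \Phi_B(p)$, $-s_v + s_w \in \Phi_B(p)$, and $s_u \neq -s_w$, then $s_u + s_w \in \Phi_B(p)$, or both $s_u \in \Phi_B(p)$ and $s_w \in \Phi_B(p)$.
   Context: $\chi_u$ is the $u$-th unit vector; $\langle p, x\rangle = \sum_u p(u)x(u)$. Let $\Phi = \{\pm \chi_u : u \in V\} \cup \{\pm\chi_u \pm \chi_v : u, v \in V, u \ne v\}$, and for $p \in B$, $\Phi_B(p) = \{\alpha \in \Phi : p + \alpha \in B\}$. For $x, y \in \{-1,0,1\}^V$, define coordinatewise $(x \sqcap y)(u) = x(u)$ if $x(u)=y(u)$ and $0$ otherwise; $(x \sqcup y)(u) = x(u)$ if $x(u)=y(u)$ or $y(u)=0$, $= y(u)$ if $x(u)=0$, and $=0$ if $0 \ne x(u) \ne y(u) \ne 0$. A function $f : \{-1,0,1\}^V \to \mathbb{R}\cup\{+\infty\}$ with $f(\mathbf{0})=0$ is bisubmodular if $f(x)+f(y) \ge f(x\sqcap y) + f(x \sqcup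 y)$ for all $x,y$; integral if its finite values are integers. $\mathrm{P}(f) = \{p \in \mathbb{R}^V : \langle p, x\rangle \le f(x) \ \forall x \in \{-1,0,1\}^V\}$. *)

From mathcomp Require Import all_boot all_order all_algebra.
Set Implicit Arguments. Unset Strict Implicit. Unset Printing Implicit Defensive.
Import Order.TTheory GRing.Theory Num.Theory.
Local Open Scope ring_scope.

(* Vectors in Z^V are finite functions V -> int. The value +oo of f is
   encoded by None : option int; finite values by Some n (integrality). *)
Definition vec (V : finType) := {ffun V -> int}.

Definition signvec (V : finType) (x : vec V) : Prop :=
  forall u, x u = 0 \/ x u = 1 \/ x u = -1.

Definition chi (V : finType) (u : V) : vec V := [ffun t => ((t == u) : nat)%:Z].

Definition zerov (V : finType) : vec V := [ffun _ => 0].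
Definition vadd (V : finType) (x y : vec V) : vec V := [ffun t => x t + y t].
Definition vopp (V : finType) (x : vec V) : vec V := [ffun t => - x t].

Definition dotv (V : finType) (p x : vec V) : int := \sum_(u : V) p u * x u.

Definition meetv (V : finType) (x y : vec V) : vec V :=
  [ffun u => if x u == y u then x u else 0].
Definition joinv (V : finType) (x y : vec V) : vec V :=
  [ffun u => if (x u == y u) || (y u == 0) then x u
             else if x u == 0 then y u else 0].

Definition eadd (a b : option int) : option int :=
  match a, b with Some a, Some b => Some (a + b) | _, _ => None end.
Definition ele (a b : option int) : Prop :=
  match a, b with
  | _, None => True
  | None, Some _ => False
  | Some a, Some b => a <= b
  end.

Definition bisubmodular (V : finType) (f : vec V -> option int) : Prop :=
  forall x y, signvec x -> signvec y ->
    ele (eadd (f (meetv x y)) (f (joinv x y))) (eadd (f x) (f y)).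

Definition inB (V : finType) (f : vec V -> option int) (p : vec V) : Prop :=
  forall x, signvec x -> forall c, f x = Some c -> dotv p x <= c.

Definition inPhi (V : finType) (a : vec V) : Prop :=
  (exists u, a = chi u \/ a = vopp (chi u)) \/
  (exists u v, u <> v /\
     exists (e1 e2 : vec V), (e1 = chi u \/ e1 = vopp (chi u)) /\
                             (e2 = chi v \/ e2 = vopp (chi v)) /\ a = vadd e1 e2).

Definition inPhiB (V : finType) (f : vec V -> option int) (p a : vec V) : Prop :=
  inPhi a /\ inB f (vadd p a).

Definition unit_at (V : finType) (u : V) (s : vec V) : Prop :=
  s = chi u \/ s = vopp (chi u).

From mathcomp Require Import all_boot all_order all_algebra.
From mathcomp Require Import zify.
From Stdlib Require Import Classical.
Set Implicit Arguments. Unset Strict Implicit. Unset Printing Implicit Defensive.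
Import Order.TTheory GRing.Theory Num.Theory.
Local Open Scope ring_scope.

(* Part (1) is a direct comparison of the inequalities at each x.  If p + s_u + s_w is not in B, a violated inequality
   <p + s_u + s_w, x> > f(x) is forced by the hypotheses to be tight: s_u and
   s_w take value 1 on x, s_v value 0, and <p, x> = f(x) - 1.  If moreover
   <p + s_u, y> > f(y), the signs of s_u, s_v, s_w on y are pinned as well, and
   then the bounds of p + s_u + s_v at x meet y and of p - s_v + s_w at x join y
   each exceed <p, .> by 1; as <p, .> is modular on {-1,0,1}^V this contradicts
   f(x) + f(y) >= f(x meet y) + f(x join y).  The claim for s_w is the same
   argument applied to s_w, -s_v, s_u. *)

Lemma vaddE (V : finType) (x y : vec V) : vadd x y = x + y.
Proof. by []. Qed.

Lemma voppE (V : finType) (x : vec V) : vopp x = - x.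
Proof. by []. Qed.

Section Pairing.
Variable V : finType.
Implicit Types (p q x y s t : vec V) (u : V).

Lemma dotvDl p q x : dotv (p + q) x = dotv p x + dotv q x.
Proof. by rewrite /dotv -big_split; apply: eq_bigr => t _; rewrite ffunE mulrDl. Qed.

Lemma dotvNl q x : dotv (- q) x = - dotv q x.
Proof. by rewrite /dotv -sumrN; apply: eq_bigr => t _; rewrite ffunE mulNr. Qed.

Lemma dotv_chi u x : dotv (chi u) x = x u.
Proof.
rewrite /dotv (bigD1 u) //= big1 ?addr0; first by rewrite ffunE eqxx mul1r.
by move=> t /negbTE ntu; rewrite ffunE ntu mul0r.
Qed.

Lemma dotv_unit_sign u s x : unit_at u s -> signvec x ->
  dotv s x = 0 \/ dotv s x = 1 \/ dotv s x = -1.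
Proof. by case=> -> /(_ u); rewrite ?dotvNl dotv_chi; lia. Qed.

Lemma dotv_unit_meet u s x y : unit_at u s ->
  dotv s (meetv x y) = if dotv s x == dotv s y then dotv s x else 0.
Proof.
case=> ->; rewrite ?dotvNl !dotv_chi ffunE // eqr_opp.
by case: ifP; rewrite ?oppr0.
Qed.

Lemma dotv_unit_join u s x y : unit_at u s ->
  dotv s (joinv x y) =
    if (dotv s x == dotv s y) || (dotv s y == 0) then dotv s x
    else if dotv s x == 0 then dotv s y else 0.
Proof.
case=> ->; rewrite ?dotvNl !dotv_chi ffunE // eqr_opp !oppr_eq0.
by case: ifP => _ //; case: ifP; rewrite ?oppr0.
Qed.

Lemma signvec_meet x y : signvec x -> signvec y -> signvec (meetv x y).
Proof.
move=> sx sy t; rewrite ffunE.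
by case: (sx t) => [|[]] ->; case: (sy t) => [|[]] ->; auto.
Qed.

Lemma signvec_join x y : signvec x -> signvec y -> signvec (joinv x y).
Proof.
move=> sx sy t; rewrite ffunE.
by case: (sx t) => [|[]] ->; case: (sy t) => [|[]] ->; auto.
Qed.

Lemma dotv_meet_join p x y : signvec x -> signvec y ->
  dotv p (meetv x y) + dotv p (joinv x y) = dotv p x + dotv p y.
Proof.
move=> sx sy; rewrite /dotv -!big_split; apply: eq_bigr => t _ /=.
rewrite -!mulrDr !ffunE; congr (_ * _).
by case: (sx t) => [|[]] ->; case: (sy t) => [|[]] ->.
Qed.

End Pairing.

Lemma unit_atN (V : finType) (u : V) s : unit_at u s -> unit_at u (- s).
Proof. by case=> ->; [right | left; rewrite opprK]. Qed.

Lemma unit_at_eq (V : finType) (u : V) s t :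
  unit_at u s -> unit_at u t -> s <> - t -> t = s.
Proof. by case=> -> [] -> //; rewrite ?opprK. Qed.

Lemma inPhi_unit (V : finType) (u : V) s : unit_at u s -> inPhi s.
Proof. by left; exists u. Qed.

Lemma inPhi_add_units (V : finType) (u w : V) s t :
  u != w -> unit_at u s -> unit_at w t -> inPhi (s + t).
Proof. by move=> /eqP nuw Hs Ht; right; exists u, w; split; last exists s, t. Qed.

Section PolytopeB.
Variables (V : finType) (f : vec V -> option int).
Implicit Types (p q s t : vec V).

Lemma inBPn q : ~ inB f q ->
  exists x c, [/\ signvec x, f x = Some c & c < dotv q x].
Proof.
move=> Bq; apply: NNPP => noviol; apply: Bq => x sx c fx.
by rewrite leNgt; apply/negP => lt_cq; apply: noviol; exists x, c.
Qed.

Lemma inB_midpoint q t : inB f (q + t) -> inB f (q - t) -> inB f q.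
Proof.
move=> Bqt Bqnt x sx c fx.
by have := Bqt x sx c fx; have := Bqnt x sx c fx; rewrite !dotvDl dotvNl; lia.
Qed.

Lemma inB_unit_step (u v : V) p s t : unit_at u s -> unit_at v t ->
  inB f p -> inB f (p + s) -> inB f (p + (- s + t)) -> inB f (p + t).
Proof.
move=> Hs Ht Bp Bps Bpst x sx c fx.
move: (Bp x sx c fx) (Bps x sx c fx) (Bpst x sx c fx).
rewrite !dotvDl dotvNl.
by have := dotv_unit_sign Hs sx; have := dotv_unit_sign Ht sx; lia.
Qed.

End PolytopeB.

Section Exchange.
Variables (V : finType) (f : vec V -> option int) (p su sv sw : vec V) (u v w : V).
Hypotheses (Hbis : bisubmodular f) (Hp : inB f p).
Hypotheses (Hsu : unit_at u su) (Hsv : unit_at v sv) (Hsw : unit_at w sw).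
Hypotheses (Buv : inB f (p + (su + sv))) (Bvw : inB f (p + (- sv + sw))).

Lemma violator_tight x c : signvec x -> f x = Some c ->
  c < dotv (p + (su + sw)) x ->
  [/\ dotv su x = 1, dotv sv x = 0, dotv sw x = 1 & dotv p x = c - 1].
Proof.
move=> sx fx; move: (Hp sx fx) (Buv sx fx) (Bvw sx fx).
rewrite !dotvDl dotvNl.
have := dotv_unit_sign Hsu sx; have := dotv_unit_sign Hsv sx.
by have := dotv_unit_sign Hsw sx => *; split; lia.
Qed.

Lemma exchange_unit : ~ inB f (p + (su + sw)) -> inB f (p + su).
Proof.
case/inBPn=> x [c [sx fx lt_cx]].
have [xu xv xw xp] := violator_tight sx fx lt_cx.
move=> y sy d fy; rewrite leNgt; apply/negP => lt_dy.
have [yu yv yw yp] : [/\ dotv su y = 1, dotv sv y = -1,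
                         dotv sw y = -1 & dotv p y = d].
  move: lt_dy (Hp sy fy) (Buv sy fy) (Bvw sy fy).
  rewrite !dotvDl dotvNl.
  have := dotv_unit_sign Hsu sy; have := dotv_unit_sign Hsv sy.
  by have := dotv_unit_sign Hsw sy => *; split; lia.
have := Hbis sx sy; rewrite fx fy.
case fm: (f (meetv x y)) => [m|] //; case fj: (f (joinv x y)) => [j|] //= le_mj.
move: (Buv (signvec_meet sx sy) fm) (Bvw (signvec_join sx sy) fj).
have := dotv_meet_join p sx sy.
rewrite !dotvDl dotvNl (dotv_unit_meet _ _ Hsu) (dotv_unit_meet _ _ Hsv).
rewrite (dotv_unit_join _ _ Hsv) (dotv_unit_join _ _ Hsw) xu xv xw yu yv yw /=.
lia.
Qed.

End Exchange.

Theorem mainTheorem4 (V : finType) (HV : (0 < #|V|)%N)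
  (f : vec V -> option int)
  (Hbis : bisubmodular f) (Hf0 : f (zerov V) = Some 0)
  (p : vec V) (Hp : inB f p)
  (u v w : V) (su sv sw : vec V)
  (Hsu : unit_at u su) (Hsv : unit_at v sv) (Hsw : unit_at w sw) :
  (inPhiB f p su -> inPhiB f p (vadd (vopp su) sv) -> inPhiB f p sv) /\
  (inPhiB f p (vadd su sv) -> inPhiB f p (vadd (vopp sv) sw) -> su <> vopp sw ->
     inPhiB f p (vadd su sw) \/ (inPhiB f p su /\ inPhiB f p sw)).
Proof.
split=> [[_ Bu] [_ Buv] | [_ Buv] [_ Bvw] nsuw].
  split; first exact: inPhi_unit Hsv.
  exact: inB_unit_step Hsu Hsv Hp Bu Buv.
rewrite !vaddE !voppE in Buv Bvw nsuw *.
have [euw | nuw] := eqVneq u w.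
  subst w.
  rewrite (unit_at_eq Hsu Hsw nsuw) in Bvw *.
  have Bu : inB f (p + su).
    apply: (inB_midpoint (t := sv)); first by rewrite -addrA.
    by rewrite -addrA [su - sv]addrC.
  by right; split; split=> //; exact: inPhi_unit Hsu.
have [Buw | nBuw] := classic (inB f (p + (su + sw))).
  by left; split; first exact: inPhi_add_units nuw Hsu Hsw.
right; split; split; [exact: inPhi_unit Hsu | | exact: inPhi_unit Hsw |].
  exact: exchange_unit Hbis Hp Hsu Hsv Hsw Buv Bvw nBuw.
apply: (exchange_unit Hbis Hp Hsw (unit_atN Hsv) Hsu).
- by rewrite [sw - sv]addrC.
- by rewrite opprK [sv + su]addrC.
- by rewrite [sw + su]addrC.
Qed.
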